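(* Let $f\colon U\otimes V\rightarrow W$ be a surjective multiplication and let $K$ be the kernel of $f$. Let $R$ be a representation of $f$ of dimension vector $\alpha$ such that the composition of linear maps $R(0)\otimes K\rightarrow R(0)\otimes U\otimes V\rightarrow R(1)\otimes V$ (the first map induced by the inclusion $K\subseteq U\otimes V$, the second equal to $R(\phi_{01})\otimes I_V$) is injective. Then the point of $R(f,\alpha)$ corresponding to $R$ lies in the left general component of $R(f,\alpha)$.
   Context: Fix a ground field $k$. A multiplication is a linear map $f\colon U\otimes V\rightarrow W$ of finite dimensional $k$-vector spaces. A representation $R$ of $f$ consists of finite dimensional vector spaces $R(0),R(1),R(2)$ and linear maps $R(\phi_{01})\colon R(0)\otimes U\rightarrow R(1)$, $R(\phi_{12})\colon R(1)\otimes V\rightarrow R(2)$, $R(\phi_{02})\colon R(0)\otimes W\rightarrow R(2)$ with $R(\phi_{12})\circ(R(\phi_{01})\otimes I_V)=R(\phi_{02})\circ(I_{R(0)}\otimes f)$. Its dimension vector is $(\dim R(0)\ \dim R(1)\ \dim R(2))$. For $\alpha=(a\ b\ c)$, $R(f,\alpha)$ is the closed subvariety of $\mathrm{Hom}(k^a\otimes U,k^b)\times\mathrm{Hom}(k^b\otimes V,k^c)\times\mathrm{Hom}(k^a\otimes W,k^c)$ of triples satisfying this relation; a representation of dimension vector $\alpha$ corresponds (after choosing bases) to a point of $R(f,\alpha)$. An irreducible component $C$ of $R(f,\alpha)$ is left general if the restriction morphism $C\rightarrow \mathrm{Hom}(k^a\otimes U,k^b)$, $(\phi_{01},\phi_{12},\phi_{02})\mapsto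 \phi_{01}$, is dominant. There is exactly one left general component of $R(f,\alpha)$, called the left general component. *)

From HB Require Import structures.
From mathcomp Require Import all_boot all_algebra.
Set Implicit Arguments. Unset Strict Implicit. Unset Printing Implicit Defensive.
Import GRing.Theory.
Local Open Scope ring_scope.

Inductive polyfun (k : fieldType) (X : Type) : ((X -> k) -> k) -> Prop :=
| pf_const (c : k) : polyfun (fun _ => c)
| pf_coord (i : X) : polyfun (fun x => x i)
| pf_add p q : polyfun p -> polyfun q -> polyfun (fun x => p x + q x)
| pf_mul p q : polyfun p -> polyfun q -> polyfun (fun x => p x * q x).

Definition subsetP {T : Type} (A B : T -> Prop) : Prop := forall x, A x -> B x.

Definition zclosed (k : fieldType) (X : Type) (Z : (X -> k) -> Prop) : Prop :=
  exists S : ((X -> k) -> k) -> Prop,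
    (forall p, S p -> polyfun p) /\
    (forall x, Z x <-> (forall p, S p -> p x = 0)).

Definition zirreducible (k : fieldType) (X : Type) (Z : (X -> k) -> Prop) : Prop :=
  (exists x, Z x) /\
  forall F1 F2 : (X -> k) -> Prop, zclosed F1 -> zclosed F2 ->
    subsetP Z (fun x => F1 x \/ F2 x) -> subsetP Z F1 \/ subsetP Z F2.

Definition irr_component (k : fieldType) (X : Type) (Y C : (X -> k) -> Prop) : Prop :=
  [/\ zclosed C, subsetP C Y, zirreducible C &
      forall C', zirreducible C' -> subsetP C C' -> subsetP C' Y -> subsetP C' C].

Definition zdense (k : fieldType) (X : Type) (Z : (X -> k) -> Prop) : Prop :=
  forall F, zclosed F -> subsetP Z F -> forall x, F x.

(* U = k^u, V = k^v, W = k^w (bases fixed); the multiplication f : U (x) V -> W is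
   given by its structure constants: f (e_i (x) e_j) = \sum_l f i j l e_l. *)

Definition rep_coord (a b c u v w : nat) : Type :=
  (('I_a * 'I_u * 'I_b) + ('I_b * 'I_v * 'I_c) + ('I_a * 'I_w * 'I_c))%type.

Section Rep.
Variables (k : fieldType) (a b c u v w : nat).
Local Notation pt := (rep_coord a b c u v w -> k).

(* R(phi01)(e_p (x) e_i) = \sum_q phi01 x p i q e_q, etc. *)
Definition phi01 (x : pt) (p : 'I_a) (i : 'I_u) (q : 'I_b) : k := x (inl (inl (p, i, q))).
Definition phi12 (x : pt) (q : 'I_b) (j : 'I_v) (r : 'I_c) : k := x (inl (inr (q, j, r))).
Definition phi02 (x : pt) (p : 'I_a) (l : 'I_w) (r : 'I_c) : k := x (inr (p, l, r)).

(* R(f, alpha): R(phi12) o (R(phi01) (x) I_V) = R(phi02) o (I (x) f). *)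
Definition Rfa (f : 'I_u -> 'I_v -> 'I_w -> k) : pt -> Prop :=
  fun x => forall (p : 'I_a) (i : 'I_u) (j : 'I_v) (r : 'I_c),
    \sum_(q < b) phi01 x p i q * phi12 x q j r
    = \sum_(l < w) f i j l * phi02 x p l r.

(* Restriction morphism to Hom(k^a (x) U, k^b). *)
Definition proj01 (x : pt) : 'I_a * 'I_u * 'I_b -> k := fun y => x (inl (inl y)).

Definition left_general (C : pt -> Prop) : Prop :=
  zdense (fun y => exists x, C x /\ proj01 x = y).

Definition surjective_mult (f : 'I_u -> 'I_v -> 'I_w -> k) : Prop :=
  forall z : 'I_w -> k, exists t : 'I_u -> 'I_v -> k,
    forall l, \sum_(i < u) \sum_(j < v) f i j l * t i j = z l.

(* R(0) (x) K, viewed inside R(0) (x) U (x) V = k^a (x) U (x) V: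
   tensors t with t(p,-,-) in K = ker f for every p. *)
Definition in_R0_tensor_ker (f : 'I_u -> 'I_v -> 'I_w -> k)
  (t : 'I_a -> 'I_u -> 'I_v -> k) : Prop :=
  forall (p : 'I_a) (l : 'I_w), \sum_(i < u) \sum_(j < v) f i j l * t p i j = 0.

Definition phi01_tensor_V (x : pt) (t : 'I_a -> 'I_u -> 'I_v -> k)
  : 'I_b -> 'I_v -> k :=
  fun q j => \sum_(p < a) \sum_(i < u) phi01 x p i q * t p i j.

Definition ker_map_injective (f : 'I_u -> 'I_v -> 'I_w -> k) (x : pt) : Prop :=
  forall t : 'I_a -> 'I_u -> 'I_v -> k,
    in_R0_tensor_ker f t -> (forall q j, phi01_tensor_V x t q j = 0) ->
    forall p i j, t p i j = 0.

End Rep.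

From Pilot Require Import Defs.
From HB Require Import structures.
From mathcomp Require Import all_boot all_algebra.
From Stdlib Require Import FunctionalExtensionality Classical.
Set Implicit Arguments. Unset Strict Implicit. Unset Printing Implicit Defensive.
Import GRing.Theory.
Local Open Scope ring_scope.

(* A point y of R(f, alpha) is a pair (A, Phi(y)), A = R(phi01) and Phi(y) the
   matrix of (-R(phi02), R(phi12)); the defining relation reads M(A) Phi(y) = 0 for
   the matrix M(A) of t |-> ((I (x) f) t, (A (x) I_V) t) on R(0) (x) U (x) V, and the
   injectivity hypothesis says that M(R(phi01)) is injective.  Call A degenerate
   when det (M(A) B) = 0 for every B; this is a closed condition, and R is not
   degenerate.  Over the non-degenerate locus, the solutions Phi of M(A) Phi = 0
   are parametrised polynomially by (A, B, T) |-> det(M B) (1 - B (M B)^-1 M) T.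
   The closure C0 of the image of this parametrisation is irreducible, contains R,
   and C0 together with the degenerate locus covers R(f, alpha).  Hence C0 is an
   irreducible component, and every component not contained in the degenerate
   locus, in particular every left general one, equals C0. *)

Section PolynomialFunctions.
Variables (k : fieldType) (X : Type).
Implicit Types p q : (X -> k) -> k.

Lemma polyfun_ext p q : p =1 q -> polyfun p -> polyfun q.
Proof. by move=> /functional_extensionality ->. Qed.

Lemma polyfun_opp p : polyfun p -> polyfun (fun z => - p z).
Proof. by move=> hp; apply: polyfun_ext (pf_mul (pf_const _ (-1)) hp) => z; rewrite mulN1r. Qed.

Lemma polyfun_sub p q : polyfun p -> polyfun q -> polyfun (fun z => p z - q z).
Proof. by move=> hp /polyfun_opp; apply: pf_add. Qed.

Lemma polyfun_sum (I : Type) (r : seq I) (P : pred I) (F : I -> (X -> k) -> k) :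
  (forall i, P i -> polyfun (F i)) -> polyfun (fun z => \sum_(i <- r | P i) F i z).
Proof.
move=> hF; elim: r => [|i r IH].
  by apply: polyfun_ext (pf_const _ 0) => z; rewrite big_nil.
case Pi: (P i); last by apply: polyfun_ext IH => z; rewrite big_cons Pi.
by apply: polyfun_ext (pf_add (hF i Pi) IH) => z; rewrite big_cons Pi.
Qed.

Lemma polyfun_prod (I : Type) (r : seq I) (P : pred I) (F : I -> (X -> k) -> k) :
  (forall i, P i -> polyfun (F i)) -> polyfun (fun z => \prod_(i <- r | P i) F i z).
Proof.
move=> hF; elim: r => [|i r IH].
  by apply: polyfun_ext (pf_const _ 1) => z; rewrite big_nil.
case Pi: (P i); last by apply: polyfun_ext IH => z; rewrite big_cons Pi.
by apply: polyfun_ext (pf_mul (hF i Pi) IH) => z; rewrite big_cons Pi.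
Qed.

Lemma polyfun_comp (Z : Type) p (g : (Z -> k) -> X -> k) :
  polyfun p -> (forall i, polyfun (fun z => g z i)) -> polyfun (fun z => p (g z)).
Proof.
by move=> hp hg; elim: hp => *; [exact: pf_const | exact: hg | exact: pf_add | exact: pf_mul].
Qed.

Lemma polyfun_on_line p (z1 z2 : X -> k) : polyfun p ->
  exists q : {poly k}, forall t, q.[t] = p (fun i => z1 i + t * (z2 i - z1 i)).
Proof.
elim=> [c | i | p1 p2 _ [q1 e1] _ [q2 e2] | p1 p2 _ [q1 e1] _ [q2 e2]].
- by exists c%:P => t; rewrite hornerC.
- by exists ((z1 i)%:P + 'X * (z2 i - z1 i)%:P) => t; rewrite !hornerE.
- by exists (q1 + q2) => t; rewrite hornerD e1 e2.
- by exists (q1 * q2) => t; rewrite hornerM e1 e2.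
Qed.

Definition polyfun_mx m n (F : (X -> k) -> 'M[k]_(m, n)) :=
  forall i j, polyfun (fun z => F z i j).

Lemma polyfun_mx_const m n (A : 'M[k]_(m, n)) : polyfun_mx (fun=> A).
Proof. by move=> i j; apply: pf_const. Qed.

Lemma polyfun_mxD m n (F G : (X -> k) -> 'M[k]_(m, n)) :
  polyfun_mx F -> polyfun_mx G -> polyfun_mx (fun z => F z + G z).
Proof.
by move=> hF hG i j; apply: polyfun_ext (pf_add (hF i j) (hG i j)) => z; rewrite mxE.
Qed.

Lemma polyfun_mxN m n (F : (X -> k) -> 'M[k]_(m, n)) :
  polyfun_mx F -> polyfun_mx (fun z => - F z).
Proof. by move=> hF i j; apply: polyfun_ext (polyfun_opp (hF i j)) => z; rewrite mxE. Qed.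

Lemma polyfun_mxZ m n (s : (X -> k) -> k) (F : (X -> k) -> 'M[k]_(m, n)) :
  polyfun s -> polyfun_mx F -> polyfun_mx (fun z => s z *: F z).
Proof. by move=> hs hF i j; apply: polyfun_ext (pf_mul hs (hF i j)) => z; rewrite mxE. Qed.

Lemma polyfun_mxM m n l (F : (X -> k) -> 'M[k]_(m, n)) (G : (X -> k) -> 'M[k]_(n, l)) :
  polyfun_mx F -> polyfun_mx G -> polyfun_mx (fun z => F z *m G z).
Proof.
move=> hF hG i j; apply: (polyfun_ext (p := fun z => \sum_r F z i r * G z r j)).
  by move=> z; rewrite mxE.
by apply: polyfun_sum => r _; apply: pf_mul.
Qed.

Lemma polyfun_det n (F : (X -> k) -> 'M[k]_n) :
  polyfun_mx F -> polyfun (fun z => \det (F z)).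
Proof.
move=> hF; apply: polyfun_sum => s _; apply: pf_mul; first exact: pf_const.
by apply: polyfun_prod => i _; apply: hF.
Qed.

Lemma polyfun_adj n (F : (X -> k) -> 'M[k]_n) :
  polyfun_mx F -> polyfun_mx (fun z => \adj (F z)).
Proof.
move=> hF i j; apply: (polyfun_ext (p := fun z => cofactor (F z) j i)).
  by move=> z; rewrite mxE.
apply: pf_mul; first exact: pf_const.
by apply: polyfun_det => i' j'; apply: polyfun_ext (hF _ _) => z; rewrite !mxE.
Qed.

End PolynomialFunctions.

Section Closure.
Variables (k : fieldType) (X : Type).
Implicit Types Z F : (X -> k) -> Prop.

Definition zclosure Z : (X -> k) -> Prop :=
  fun y => forall p, polyfun p -> (forall z, Z z -> p z = 0) -> p y = 0.

Lemma zclosure_closed Z : zclosed (zclosure Z).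
Proof.
exists (fun p => polyfun p /\ forall z, Z z -> p z = 0); split; first by move=> p [].
by move=> y; split=> [Zy p [] | Zy p hp hZ]; [exact: Zy | exact: Zy].
Qed.

Lemma sub_zclosure Z : Defs.subsetP Z (zclosure Z).
Proof. by move=> y Zy p _; apply. Qed.

Lemma zclosure_min Z F : zclosed F -> Defs.subsetP Z F -> Defs.subsetP (zclosure Z) F.
Proof.
move=> [S [polyS eF]] ZF y Zy; apply/eF => p Sp.
by apply: Zy => [|z /ZF /eF]; [exact: polyS | apply].
Qed.

Lemma zirreducible_closure Z : zirreducible Z -> zirreducible (zclosure Z).
Proof.
move=> [[z0 Zz0] irrZ]; split; first by exists z0; apply: sub_zclosure.
move=> F1 F2 cF1 cF2 cover.
have [] := irrZ F1 F2 cF1 cF2 (fun z Zz => cover z (sub_zclosure Zz)) => ZF;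
  [left | right]; exact: zclosure_min.
Qed.

Lemma zclosedPn F y : zclosed F -> ~ F y ->
  exists2 p, polyfun p /\ (forall z, F z -> p z = 0) & p y != 0.
Proof.
move=> [S [polyS eF]] Fy; apply: NNPP => noP; apply/Fy/eF => p Sp.
apply/eqP; apply: contraT => py; case: noP; exists p => //.
by split=> [|z /eF]; [exact: polyS | apply].
Qed.

Lemma zclosed_preimage (Z : Type) F (g : (Z -> k) -> X -> k) :
  zclosed F -> (forall i, polyfun (fun z => g z i)) -> zclosed (fun z => F (g z)).
Proof.
move=> [S [polyS eF]] polyg.
exists (fun P => exists2 p, S p & P = fun z => p (g z)); split.
  by move=> _ [p Sp ->]; apply: polyfun_comp => //; apply: polyS.
move=> z; split=> [/eF Fgz _ [p Sp ->] | Sz]; first exact: Fgz.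
by apply/eF => p Sp; apply: (Sz (fun z => p (g z))); exists p.
Qed.

End Closure.

Lemma zirreducible_image (k : closedFieldType) (X Z : Type) (g : (Z -> k) -> X -> k) :
  (forall i, polyfun (fun z => g z i)) -> zirreducible (fun y => exists z, g z = y).
Proof.
move=> polyg; split; first by exists (g (fun=> 0)); exists (fun=> 0).
move=> F1 F2 cF1 cF2 cover; apply: NNPP => /not_or_and [nF1 nF2].
have witness F : ~ Defs.subsetP (fun y => exists z, g z = y) F -> exists z, ~ F (g z).
  move=> nF; apply: NNPP => hF; apply: nF => _ [z <-].
  by apply: NNPP => ?; apply: hF; exists z.
have [[z1 F1z1] [z2 F2z2]] := (witness _ nF1, witness _ nF2).
have [p1 [polyp1 p1F1] p1z1] := zclosedPn cF1 F1z1.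
have [p2 [polyp2 p2F2] p2z2] := zclosedPn cF2 F2z2.
have [q1 e1] := polyfun_on_line z1 z2 (polyfun_comp polyp1 polyg).
have [q2 e2] := polyfun_on_line z1 z2 (polyfun_comp polyp2 polyg).
have line0 : (fun i => z1 i + 0 * (z2 i - z1 i)) = z1.
  by apply: functional_extensionality => i; rewrite mul0r addr0.
have line1 : (fun i => z1 i + 1 * (z2 i - z1 i)) = z2.
  by apply: functional_extensionality => i; rewrite mul1r addrC subrK.
(* each point of the line through z1 and z2 is a zero of p1 or of p2,
   and k is infinite *)
have : q1 * q2 == 0.
  apply: contraT => /closed_nonrootP [t]; rewrite /root hornerM e1 e2.
  have := cover _ (ex_intro _ (fun i => z1 i + t * (z2 i - z1 i)) erefl).
  by case=> [/p1F1 -> | /p2F2 ->]; rewrite ?mul0r ?mulr0 eqxx.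
rewrite mulf_eq0 => /orP [/eqP q10 | /eqP q20].
- by move: p1z1; rewrite -line0 -e1 q10 horner0 eqxx.
- by move: p2z2; rewrite -line1 -e2 q20 horner0 eqxx.
Qed.

Section ComponentOfCover.
Variables (k : fieldType) (X : Type) (Y Z D : (X -> k) -> Prop).
Hypotheses (closedZ : zclosed Z) (closedD : zclosed D) (irrZ : zirreducible Z).
Hypotheses (subZY : Defs.subsetP Z Y) (coverY : Defs.subsetP Y (fun y => Z y \/ D y)).

Lemma irreducible_sub_cover C : zirreducible C -> Defs.subsetP C Y ->
  Defs.subsetP C Z \/ Defs.subsetP C D.
Proof. by move=> [_ irrC] CY; apply: irrC => // y /CY /coverY. Qed.

Lemma cover_irr_component : ~ Defs.subsetP Z D -> irr_component Y Z.
Proof.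
move=> nZD; split=> // C irrC ZC CY.
by case: (irreducible_sub_cover irrC CY) => // CD; case: nZD => y /ZC /CD.
Qed.

Lemma sub_irr_component_cover C : irr_component Y C -> ~ Defs.subsetP C D ->
  Defs.subsetP Z C.
Proof.
move=> [_ CY irrC maxC] nCD.
by case: (irreducible_sub_cover irrC CY) => // CZ; apply: maxC.
Qed.

End ComponentOfCover.

Section KernelParametrisation.
Variables (R : comNzRingType) (n m : nat) (M : 'M[R]_(n, m)) (B : 'M[R]_(m, n)).

(* det (M B) (1 - B (M B)^-1 M), written with the adjugate so as to be
   polynomial in M and B. *)
Definition kerparam_mx : 'M[R]_m := \det (M *m B) *: 1%:M - B *m \adj (M *m B) *m M.

Lemma mulmx_kerparam : M *m kerparam_mx = 0.
Proof.
rewrite mulmxBr -scalemxAr mulmx1 !mulmxA mul_mx_adj mul_scalar_mx.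
by rewrite subrr.
Qed.

Lemma kerparam_mulmx_ker l (P : 'M[R]_(m, l)) :
  M *m P = 0 -> kerparam_mx *m P = \det (M *m B) *: P.
Proof.
move=> MP0; rewrite mulmxBl -!mulmxA MP0 !mulmx0 subr0.
by rewrite -scalemxAl mul1mx.
Qed.

End KernelParametrisation.

Section EnumIndexedMatrices.
Variable R : nzRingType.

Lemma sum_pair (I J : finType) (F : I * J -> R) : \sum_x F x = \sum_i \sum_j F (i, j).
Proof. by rewrite pair_bigA; apply: eq_bigr => -[]. Qed.

Lemma sum_delta (I : finType) (i0 : I) (F : I -> R) : \sum_i (i == i0)%:R * F i = F i0.
Proof.
by rewrite (bigD1 i0) //= eqxx mul1r big1 ?addr0 // => i /negbTE ->; rewrite mul0r.
Qed.

Lemma sum_enum (I : finType) (G : I -> R) : \sum_(r < #|I|) G (enum_val r) = \sum_i G i.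
Proof. by rewrite -(big_enum_val G) /= (eq_bigl xpredT). Qed.

Definition fun_mx (I J : finType) (F : I -> J -> R) : 'M[R]_(#|I|, #|J|) :=
  \matrix_(r, s) F (enum_val r) (enum_val s).

Lemma fun_mxE (I J : finType) (F : I -> J -> R) i j :
  fun_mx F (enum_rank i) (enum_rank j) = F i j.
Proof. by rewrite mxE !enum_rankK. Qed.

Lemma matrix_enumP (I J : finType) (A B : 'M[R]_(#|I|, #|J|)) :
  (forall i j, A (enum_rank i) (enum_rank j) = B (enum_rank i) (enum_rank j)) -> A = B.
Proof. by move=> eAB; apply/matrixP => r s; rewrite -(enum_valK r) -(enum_valK s). Qed.

Lemma fun_mx_mulE (I J L : finType) (F : I -> J -> R) (G : J -> L -> R) i l :
  (fun_mx F *m fun_mx G) (enum_rank i) (enum_rank l) = \sum_j F i j * G j l.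
Proof.
rewrite mxE -(sum_enum (fun j => F i j * G j l)).
by apply: eq_bigr => j _; rewrite !mxE !enum_rankK.
Qed.

Lemma row_fun_mx_mulE (I J : finType) (t : 'rV[R]_#|I|) (F : I -> J -> R) j :
  (t *m fun_mx F) 0 (enum_rank j) = \sum_i t 0 (enum_rank i) * F i j.
Proof.
rewrite mxE -(sum_enum (fun i => t 0 (enum_rank i) * F i j)).
by apply: eq_bigr => i _; rewrite !mxE enum_valK enum_rankK.
Qed.

End EnumIndexedMatrices.

Lemma row_free_fun_mx (K : fieldType) (I J : finType) (F : I -> J -> K) :
  (forall T : I -> K, (forall j, \sum_i T i * F i j = 0) -> forall i, T i = 0) ->
  row_free (fun_mx F).
Proof.
move=> injF; apply: inj_row_free => t tF0.
apply/rowP => r; rewrite -(enum_valK r) mxE.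
apply: (injF (fun i => t 0 (enum_rank i))) => j.
by rewrite -row_fun_mx_mulE tF0 mxE.
Qed.

Lemma polyfun_fun_mx (k : fieldType) (X : Type) (I J : finType)
    (F : (X -> k) -> I -> J -> k) :
  (forall i j, polyfun (fun z => F z i j)) -> polyfun_mx (fun z => fun_mx (F z)).
Proof. by move=> polyF r s; apply: polyfun_ext (polyF _ _) => z; rewrite mxE. Qed.

Section RepresentationVariety.
Variables (k : fieldType) (a b c u v w : nat) (f : 'I_u -> 'I_v -> 'I_w -> k).
Local Notation pt := (rep_coord a b c u v w -> k).
Local Notation src := ('I_a * 'I_u * 'I_v)%type.
Local Notation tgt := (('I_a * 'I_w) + ('I_b * 'I_v))%type.
Local Notation hom01 := ('I_a * 'I_u * 'I_b)%type.
Implicit Types (y : pt) (A : hom01 -> k).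

(* [rel_mx A] is M(A), acting on row vectors, and [out_mx y] is Phi(y). *)
Definition rel_mx (A : hom01 -> k) : 'M[k]_(#|{: src}|, #|{: tgt}|) :=
  fun_mx (fun (x : src) (s : tgt) => let: (p, i, j) := x in
    match s with
    | inl (p', l) => (p' == p)%:R * f i j l
    | inr (q, j') => (j' == j)%:R * A (p, i, q)
    end).

Definition out_mx (y : pt) : 'M[k]_(#|{: tgt}|, #|{: 'I_c}|) :=
  fun_mx (fun (s : tgt) (r : 'I_c) =>
    match s with
    | inl (p, l) => - phi02 y p l r
    | inr (q, j) => phi12 y q j r
    end).

Definition rep_of_mx (A : hom01 -> k) (Phi : 'M[k]_(#|{: tgt}|, #|{: 'I_c}|)) : pt :=
  fun co => match co with
  | inl (inl y) => A y
  | inl (inr (q, j, r)) => Phi (enum_rank (inr (q, j) : tgt)) (enum_rank r)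
  | inr (p, l, r) => - Phi (enum_rank (inl (p, l) : tgt)) (enum_rank r)
  end.

Lemma proj01_rep_of_mx A Phi : proj01 (rep_of_mx A Phi) = A.
Proof. by []. Qed.

Lemma out_mx_rep_of_mx A Phi : out_mx (rep_of_mx A Phi) = Phi.
Proof. by apply: matrix_enumP => -[[p l] | [q j]] r; rewrite fun_mxE ?opprK. Qed.

Lemma rep_of_mxK y : rep_of_mx (proj01 y) (out_mx y) = y.
Proof.
by apply: functional_extensionality => -[[[[p i] q] | [[q j] r]] | [[p l] r]];
  rewrite /= ?fun_mxE ?opprK.
Qed.

Lemma rel_out_mulE y p i j r :
  (rel_mx (proj01 y) *m out_mx y) (enum_rank (p, i, j)) (enum_rank r) =
  \sum_q phi01 y p i q * phi12 y q j r - \sum_l f i j l * phi02 y p l r.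
Proof.
rewrite fun_mx_mulE big_sumType /= !sum_pair /=.
under eq_bigr => p' _ do under eq_bigr => l _ do rewrite -mulrA.
under [X in _ + X]eq_bigr => q _ do under eq_bigr => j' _ do rewrite -mulrA.
under eq_bigr => p' _ do rewrite -mulr_sumr.
rewrite sum_delta addrC -sumrN.
by congr (_ + _); apply: eq_bigr => ? _; rewrite ?sum_delta ?mulrN.
Qed.

Lemma Rfa_rel_mx y : Rfa f y <-> rel_mx (proj01 y) *m out_mx y = 0.
Proof.
split=> [Ry | M0 p i j r].
  by apply: matrix_enumP => -[[p i] j] r; rewrite rel_out_mulE Ry subrr mxE.
by apply/eqP; rewrite -subr_eq0 -rel_out_mulE M0 mxE.
Qed.

Lemma ker_map_injective_row_free y :
  ker_map_injective f y -> row_free (rel_mx (proj01 y)).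
Proof.
move=> injy; apply: row_free_fun_mx => T TM0 [[p i] j].
apply: (injy (fun p i j => T (p, i, j))) => [p' l | q j'].
  apply: eq_trans (TM0 (inl (p', l))).
  rewrite !sum_pair (bigD1 p') //= [X in _ + X]big1.
    rewrite addr0; apply: eq_bigr => i' _; apply: eq_bigr => j' _.
    by rewrite eqxx mul1r mulrC.
  move=> p'' /negbTE np; apply: big1 => i' _; apply: big1 => j' _.
  by rewrite eq_sym np mul0r mulr0.
apply: eq_trans (TM0 (inr (q, j'))); rewrite !sum_pair.
apply: eq_bigr => p' _; apply: eq_bigr => i' _.
by under eq_bigr => j'' _ do rewrite mulrCA eq_sym; rewrite sum_delta mulrC.
Qed.

Definition degenerate A := forall B, \det (rel_mx A *m B) = 0.

Lemma row_free_nondegenerate A : row_free (rel_mx A) -> ~ degenerate A.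
Proof. by case/row_freeP => B MB1 /(_ B); rewrite MB1 det1; apply/eqP/oner_neq0. Qed.

Local Notation param := (hom01 + (tgt * src) + (tgt * 'I_c))%type.
Implicit Types z : param -> k.

Definition param_A z : hom01 -> k := fun q => z (inl (inl q)).
Definition param_B z : 'M[k]_(#|{: tgt}|, #|{: src}|) :=
  fun_mx (fun s x => z (inl (inr (s, x)))).
Definition param_T z : 'M[k]_(#|{: tgt}|, #|{: 'I_c}|) :=
  fun_mx (fun s r => z (inr (s, r))).

Definition param_rep z : pt :=
  rep_of_mx (param_A z) (kerparam_mx (rel_mx (param_A z)) (param_B z) *m param_T z).

Lemma Rfa_param_rep z : Rfa f (param_rep z).
Proof.
apply/Rfa_rel_mx; rewrite proj01_rep_of_mx out_mx_rep_of_mx.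
by rewrite mulmxA mulmx_kerparam mul0mx.
Qed.

Lemma param_rep_onto y : Rfa f y -> ~ degenerate (proj01 y) -> exists z, param_rep z = y.
Proof.
move=> /Rfa_rel_mx My0 /not_all_ex_not [B /eqP detB].
set d := \det (rel_mx (proj01 y) *m B) in detB.
pose z : param -> k := fun co => match co with
  | inl (inl q) => proj01 y q
  | inl (inr (s, x)) => B (enum_rank s) (enum_rank x)
  | inr (s, r) => (d^-1 *: out_mx y) (enum_rank s) (enum_rank r)
  end.
have eB : param_B z = B by apply: matrix_enumP => s x; rewrite fun_mxE.
have eT : param_T z = d^-1 *: out_mx y by apply: matrix_enumP => s r; rewrite fun_mxE.
exists z; rewrite /param_rep eB eT -scalemxAr (kerparam_mulmx_ker _ My0) -/d.
by rewrite scalerA mulVf // scale1r rep_of_mxK.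
Qed.

Lemma polyfun_rel_mx (X : Type) (g : (X -> k) -> hom01 -> k) :
  (forall q, polyfun (fun x => g x q)) -> polyfun_mx (fun x => rel_mx (g x)).
Proof.
move=> polyg; apply: polyfun_fun_mx => -[[p i] j] [[p' l] | [q j']];
  apply: pf_mul; [exact: pf_const | exact: pf_const | exact: pf_const | exact: polyg].
Qed.

Lemma polyfun_param_rep co : polyfun (fun z => param_rep z co).
Proof.
have polyA : polyfun_mx (fun z => rel_mx (param_A z)).
  exact: polyfun_rel_mx (fun q => pf_coord _ (inl (inl q))).
have polyB : polyfun_mx param_B by apply: polyfun_fun_mx => s x; apply: pf_coord.
have polyT : polyfun_mx param_T by apply: polyfun_fun_mx => s r; apply: pf_coord.
have polyAB := polyfun_mxM polyA polyB.
have polyPhi :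
    polyfun_mx (fun z => kerparam_mx (rel_mx (param_A z)) (param_B z) *m param_T z).
  apply/polyfun_mxM/polyT/polyfun_mxD.
    exact/polyfun_mxZ/polyfun_mx_const/polyfun_det.
  exact/polyfun_mxN/polyfun_mxM/polyA/polyfun_mxM/polyfun_adj.
case: co => [[q | [[q j] r]] | [[p l] r]];
  [exact: pf_coord | exact: polyPhi | exact/polyfun_opp/polyPhi].
Qed.

Lemma zclosed_Rfa : zclosed (Rfa f : pt -> Prop).
Proof.
exists (fun P => exists p i j r, P = fun y => \sum_q phi01 y p i q * phi12 y q j r
                                        - \sum_l f i j l * phi02 y p l r); split.
  move=> _ [p [i [j [r ->]]]]; apply: polyfun_sub; apply: polyfun_sum => q _;
    apply: pf_mul; (exact: pf_coord || exact: pf_const).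
move=> y; split=> [Ry _ [p [i [j [r ->]]]] | vanish p i j r]; first by rewrite Ry subrr.
apply/eqP; rewrite -subr_eq0; apply/eqP.
exact: (vanish _ (ex_intro _ p (ex_intro _ i (ex_intro _ j (ex_intro _ r erefl))))).
Qed.

Lemma zclosed_degenerate : zclosed degenerate.
Proof.
exists (fun P => exists B, P = fun A => \det (rel_mx A *m B)); split.
  move=> _ [B ->]; apply/polyfun_det/polyfun_mxM/polyfun_mx_const.
  exact: polyfun_rel_mx (fun q => pf_coord _ q).
move=> A; split=> [degA _ [B ->] | vanish B]; first exact: degA.
exact: (vanish _ (ex_intro _ B erefl)).
Qed.

End RepresentationVariety.

Theorem lemma3p2 (k : closedFieldType) (a b c u v w : nat)
  (f : 'I_u -> 'I_v -> 'I_w -> k)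
  (x : rep_coord a b c u v w -> k) :
  surjective_mult f ->
  Rfa f x ->
  ker_map_injective f x ->
  (exists C, irr_component (Rfa f) C /\ left_general C /\ C x) /\
  (forall C, irr_component (Rfa f) C -> left_general C -> C x).
Proof.
move=> _ Rx /ker_map_injective_row_free/row_free_nondegenerate ndx.
pose C0 : (rep_coord a b c u v w -> k) -> Prop :=
  zclosure (fun y => exists z, param_rep f z = y).
pose D (y : rep_coord a b c u v w -> k) := degenerate f (proj01 y).
have closedD : zclosed D :=
  zclosed_preimage (g := @proj01 _ a b c u v w) (zclosed_degenerate a b f)
    (fun q => pf_coord _ (inl (inl q))).
have irrC0 : zirreducible C0 by apply/zirreducible_closure/zirreducible_image/polyfun_param_rep.
have C0R : Defs.subsetP C0 (Rfa f).
  by apply: zclosure_min (zclosed_Rfa a b c f) _ => _ [z <-]; apply: Rfa_param_rep.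
have cover : Defs.subsetP (Rfa f) (fun y => C0 y \/ D y).
  move=> y Ry; case: (classic (D y)) => [|ndy]; [by right | left].
  by apply: sub_zclosure; apply: param_rep_onto.
have C0x : C0 x by apply: sub_zclosure; apply: param_rep_onto.
split.
  exists C0; split; [|split] => //.
    by apply: (cover_irr_component (zclosure_closed _) closedD) => // /(_ x C0x).
  move=> F _ C0F A; apply: C0F.
  exists (param_rep f (fun co => if co is inl (inl q) then A q else 0)).
  by split; [apply: sub_zclosure; eexists | rewrite proj01_rep_of_mx].
move=> C compC lgC.
apply: (sub_irr_component_cover (zclosure_closed _) closedD irrC0 C0R cover compC) => // CD.
by apply: ndx; apply: (lgC _ (zclosed_degenerate a b f)) => _ [y [/CD Dy <-]].
Qed.
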